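(* Let $(X,\Sigma)$ be an implicational base with closure operator $\phi$, let $\mathcal{B}^+$ be an antichain of $\mathcal{L}(\Sigma)$, let $\mathcal{B}^-$ be its dual antichain in $\mathcal{L}(\Sigma)$, and let $\mathcal{H}=\{X\setminus B\mid B\in\mathcal{B}^+\}$. If $I\in\mathcal{B}^-$ and $T$ is a minimal transversal of $\mathcal{H}$ with $I\subseteq\phi(T)$, then $T$ is a minimal covering set of $I$.
   Context: An implicational base $(X,\Sigma)$ consists of a finite set $X$ and a finite set $\Sigma$ of implications $A\rightarrow b$ with $A\subseteq X$ and $b\in X$. A set $C\subseteq X$ is closed in $\Sigma$ if for every $A\rightarrow b\in\Sigma$, $A\not\subseteq C$ or $b\in C$; $\phi(C)$ denotes the smallest closed set containing $C$. $\mathcal{L}(\Sigma)$ is the lattice of closed sets ordered by inclusion; an antichain of it is a family of pairwise inclusion-incomparable closed sets. For a family $\mathcal{B}$ of closed sets, $\downarrow\mathcal{B}$ (resp. $\uparrow\mathcal{B}$) is the set of closed sets contained in (resp. containing) some member of $\mathcal{B}$. The dual antichain of $\mathcal{B}^+$ is the unique antichain $\mathcal{B}^-$ with $\downarrow\mathcal{B}^+\cup\uparrow\mathcal{B}^-$ equal to the set of all closed sets and $\downarrow\mathcal{B}^+\cap\uparrow\mathcal{B}^-=\emptyset$. A transversal of $\mathcal{H}\subseteq 2^X$ is a set meeting every member of $\mathcal{H}$; minimal means inclusion-minimal. For $T,I\subseteq X$, $T$ is a covering set of $I$ if $I\subseteq\phi(T)$; it is a minimal covering set of $I$ if moreover $I\not\subseteq\phi(T\setminus\{x\})$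 for every $x\in T$. *)

(* The ground set X is the finite type T (X = [set: T]);
   an implicational base Sigma is a finite list of implications (A, b). *)
From mathcomp Require Import all_boot.
Set Implicit Arguments. Unset Strict Implicit. Unset Printing Implicit Defensive.

Section Defs.
Variable T : finType.
Implicit Types (Sigma : seq ({set T} * T)) (C A : {set T}) (F : {set {set T}}).

Definition closed Sigma C : bool :=
  all (fun ab : {set T} * T => ~~ (ab.1 \subset C) || (ab.2 \in C)) Sigma.

Definition phi Sigma C : {set T} :=
  \bigcap_(D : {set T} | closed Sigma D && (C \subset D)) D.

Definition antichain Sigma F : Prop :=
  (forall B, B \in F -> closed Sigma B) /\
  (forall B1 B2, B1 \in F -> B2 \in F -> B1 \subset B2 -> B1 = B2).

Definition downset Sigma F : {set {set T}} :=
  [set C | closed Sigma C & [exists B in F, C \subset B]].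
Definition upset Sigma F : {set {set T}} :=
  [set C | closed Sigma C & [exists B in F, B \subset C]].

Definition dual_antichain Sigma Bp Bm : Prop :=
  antichain Sigma Bm /\
  (forall C, closed Sigma C -> C \in downset Sigma Bp :|: upset Sigma Bm) /\
  downset Sigma Bp :&: upset Sigma Bm = set0.

Definition transversal F (S : {set T}) : bool :=
  [forall E in F, E :&: S != set0].

Definition minimal_transversal F (S : {set T}) : bool := minset (transversal F) S.

Definition covering_set Sigma (I S : {set T}) : bool := I \subset phi Sigma S.

Definition minimal_covering_set Sigma (I S : {set T}) : Prop :=
  covering_set Sigma I S /\
  (forall x, x \in S -> ~~ (I \subset phi Sigma (S :\ x))).

End Defs.

From Pilot Require Import Defs.
From mathcomp Require Import all_boot.
Set Implicit Arguments. Unset Strict Implicit. Unset Printing Implicit Defensive.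

(* By minimality, T \ {x} misses some
   member X \ B of H, i.e. T \ {x} is contained in the closed set B in B+;
   since phi(T \ {x}) is the least closed superset of T \ {x}, it is contained
   in B as well.  If I were included in phi(T \ {x}), I would lie below B in B+
   while being itself a member of B-, so I would belong to both the down-set
   of B+ and the up-set of B-, which are disjoint by duality. *)

Section Closure.
Variables (T : finType) (Sigma : seq ({set T} * T)).

Lemma phi_min (C D : {set T}) :
  Defs.closed Sigma D -> C \subset D -> phi Sigma C \subset D.
Proof. by move=> clD CD; apply: bigcap_inf; rewrite clD CD. Qed.

Lemma dual_antichain_sep (Bp Bm : {set {set T}}) (B I : {set T}) :
  dual_antichain Sigma Bp Bm -> B \in Bp -> I \in Bm -> ~~ (I \subset B).
Proof.
move=> [[clBm _] [_ disj]] BBp IBm; apply/negP => IB.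
have : I \in downset Sigma Bp :&: upset Sigma Bm.
  rewrite !inE clBm //=; apply/andP; split; apply/existsP.
  - by exists B; rewrite BBp IB.
  - by exists I; rewrite IBm subxx.
by rewrite disj inE.
Qed.

End Closure.

Lemma minimal_transversal_remove (T : finType) (F : {set {set T}}) (S : {set T}) x :
  minimal_transversal F S -> x \in S ->
  exists2 E, E \in F & E :&: (S :\ x) = set0.
Proof.
move=> /minsetP [_ minS] xS.
have : ~~ Defs.transversal F (S :\ x).
  apply/negP => tr; have /setP/(_ x) := minS _ tr (subsetDl _ _).
  by rewrite xS !inE eqxx.
case/forallPn => E; rewrite negb_imply => /andP [EF /negPn /eqP ES].
by exists E.
Qed.

Lemma setCI_eq0_sub (T : finType) (A B : {set T}) : ~: B :&: A = set0 -> A \subset B.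
Proof. by move/eqP; rewrite setI_eq0 disjoint_sym -subsets_disjoint. Qed.

Theorem lemma4 (T : finType) (Sigma : seq ({set T} * T))
    (Bp Bm : {set {set T}}) (I S : {set T}) :
  antichain Sigma Bp ->
  dual_antichain Sigma Bp Bm ->
  I \in Bm ->
  minimal_transversal [set ~: B | B in Bp] S ->
  I \subset phi Sigma S ->
  minimal_covering_set Sigma I S.
Proof.
move=> [clBp _] dual IBm minS IS; split=> // x xS; apply/negP => Ix.
have [_ /imsetP [B BBp ->] missB] := minimal_transversal_remove minS xS.
have phiB : phi Sigma (S :\ x) \subset B.
  by apply: phi_min; [exact: clBp | exact: setCI_eq0_sub].
by move: (dual_antichain_sep dual BBp IBm); rewrite (subset_trans Ix phiB).
Qed.
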